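(* Let $(\mathscr{C},\mathbb{E},\mathfrak{s})$ be an extriangulated category such that for every object $C$ the morphism $C\to 0$ is an $\mathbb{E}$-inflation and $0\to C$ is an $\mathbb{E}$-deflation, and let $\Sigma$ and $\mathbf{E}^1(-,-)=\mathscr{C}(-,\Sigma -)$ be as in the context. Let $A$ be an object and $f\colon X\to Y$ a morphism of $\mathscr{C}$. Then $\mathbf{E}^1(A,f)\cong\mathbb{E}(A,f)$ and $\mathbf{E}^1(f,A)\cong\mathbb{E}(f,A)$ as objects of the morphism category $\mathrm{Mor}(Ab)$ (here $\mathbf{E}^1(A,f)\colon\mathscr{C}(A,\Sigma X)\to\mathscr{C}(A,\Sigma Y)$ is $\varepsilon\mapsto\Sigma f\circ\varepsilon$ and $\mathbf{E}^1(f,A)\colon\mathscr{C}(Y,\Sigma A)\to\mathscr{C}(X,\Sigma A)$ is $\varepsilon\mapsto\varepsilon\circ f$).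
   Context: An extriangulated category $(\mathscr{C},\mathbb{E},\mathfrak{s})$ is in the sense of Nakaoka–Palu: $\mathscr{C}$ additive, $\mathbb{E}\colon\mathscr{C}^{\mathrm{op}}\times\mathscr{C}\to Ab$ biadditive, $\mathfrak{s}$ an additive realisation assigning to $\delta\in\mathbb{E}(C,A)$ an equivalence class of sequences $[A\to B\to C]$, satisfying (ET1)–(ET4)$^{\mathrm{op}}$. For $a\colon A\to A'$ and $c\colon C'\to C$ write $a_*\delta=\mathbb{E}(C,a)(\delta)$ and $c^*\delta=\mathbb{E}(c,A)(\delta)$; $\mathbb{E}(c,A)$ denotes $\mathbb{E}(c^{\mathrm{op}},A)$. A morphism $x\colon A\to B$ is an $\mathbb{E}$-inflation if $\mathfrak{s}(\delta)=[A\xrightarrow{x}B\to C]$ for some $\delta\in\mathbb{E}(C,A)$; dually for $\mathbb{E}$-deflations. For each object $Y$, $\Sigma Y$ is a chosen object with $\delta_Y\in\mathbb{E}(\Sigma Y,Y)$ such that $\mathfrak{s}(\delta_Y)=[Y\to 0\to\Sigma Y]$; for $f\colon X\to Y$, $\Sigma f$ is the unique morphism $\Sigma X\to\Sigma Y$ with $f_*\delta_X=(\Sigma f)^*\delta_Y$. $\mathrm{Mor}(Ab)$ is the category whose objects are homomorphisms of abelian groups and whose morphisms are commutative squares. *)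

From HB Require Import structures.
From mathcomp Require Import all_boot all_algebra.
Set Implicit Arguments. Unset Strict Implicit. Unset Printing Implicit Defensive.
Import GRing.Theory.
Local Open Scope ring_scope.

Record AddCat := {
  Obj :> Type;
  CHom : Obj -> Obj -> zmodType;
  ccomp : forall X Y Z : Obj, CHom Y Z -> CHom X Y -> CHom X Z;
  idm : forall X : Obj, CHom X X;
  comp_assoc : forall X Y Z W (h : CHom Z W) (g : CHom Y Z) (f : CHom X Y),
      ccomp h (ccomp g f) = ccomp (ccomp h g) f;
  comp_idl : forall X Y (f : CHom X Y), ccomp (idm Y) f = f;
  comp_idr : forall X Y (f : CHom X Y), ccomp f (idm X) = f;
  comp_addl : forall X Y Z (g1 g2 : CHom Y Z) (f : CHom X Y),
      ccomp (g1 + g2) f = ccomp g1 f + ccomp g2 f;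
  comp_addr : forall X Y Z (g : CHom Y Z) (f1 f2 : CHom X Y),
      ccomp g (f1 + f2) = ccomp g f1 + ccomp g f2;
  zobj : Obj;
  zobj_init : forall X (f : CHom zobj X), f = 0;
  zobj_term : forall X (f : CHom X zobj), f = 0;
  bp : Obj -> Obj -> Obj;
  bp_i1 : forall X Y, CHom X (bp X Y);
  bp_i2 : forall X Y, CHom Y (bp X Y);
  bp_p1 : forall X Y, CHom (bp X Y) X;
  bp_p2 : forall X Y, CHom (bp X Y) Y;
  bp_p1i1 : forall X Y, ccomp (bp_p1 X Y) (bp_i1 X Y) = idm X;
  bp_p2i2 : forall X Y, ccomp (bp_p2 X Y) (bp_i2 X Y) = idm Y;
  bp_p1i2 : forall X Y, ccomp (bp_p1 X Y) (bp_i2 X Y) = 0;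
  bp_p2i1 : forall X Y, ccomp (bp_p2 X Y) (bp_i1 X Y) = 0;
  bp_sum : forall X Y, ccomp (bp_i1 X Y) (bp_p1 X Y) + ccomp (bp_i2 X Y) (bp_p2 X Y)
                       = idm (bp X Y)
}.

Arguments CHom {_} X Y.
Arguments ccomp {_ X Y Z} g f.
Arguments idm {_} X.
Arguments zobj {_}.
Arguments bp {_} X Y.
Arguments bp_i1 {_} X Y.
Arguments bp_i2 {_} X Y.
Arguments bp_p1 {_} X Y.
Arguments bp_p2 {_} X Y.

Section AddCatDefs.
Variable C : AddCat.

Definition is_iso (X Y : C) (f : CHom X Y) :=
  exists g : CHom Y X, ccomp g f = idm X /\ ccomp f g = idm Y.

Definition seq_equiv (A B B' C0 : C) (x : CHom A B) (y : CHom B C0)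
    (x' : CHom A B') (y' : CHom B' C0) :=
  exists b : CHom B B', is_iso b /\ ccomp b x = x' /\ ccomp y' b = y.

Definition hom_bp (X X' Y Y' : C) (f : CHom X Y) (g : CHom X' Y') : CHom (bp X X') (bp Y Y') :=
  ccomp (bp_i1 Y Y') (ccomp f (bp_p1 X X')) + ccomp (bp_i2 Y Y') (ccomp g (bp_p2 X X')).

End AddCatDefs.

(* Data of an extriangulated category: the bifunctor E (Ext C0 A =    *)
(* E(C0,A), contravariant in the first variable) and the realisation  *)
(* s, given as the relation  real d x y  <->  s(d) = [A -x-> B -y-> C0]. *)
Record ExtData (C : AddCat) := {
  Ext : C -> C -> zmodType;
  Emap : forall (C1 C0 A0 A1 : C), CHom C1 C0 -> CHom A0 A1 -> Ext C0 A0 -> Ext C1 A1;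
  real : forall (C0 A : C), Ext C0 A -> forall B : C, CHom A B -> CHom B C0 -> Prop
}.

Arguments Ext {C} e X Y.
Arguments Emap {C} e {C1 C0 A0 A1} c a d.
Arguments real {C} e {C0 A} d {B} x y.

Section ExtDefs.
Variables (C : AddCat) (E : ExtData C).

Definition pushE (C0 A A' : C) (a : CHom A A') (d : Ext E C0 A) : Ext E C0 A' :=
  Emap E (idm C0) a d.
Definition pullE (C0 C' A : C) (c : CHom C' C0) (d : Ext E C0 A) : Ext E C' A :=
  Emap E c (idm A) d.

Definition ext_bp (C0 C0' A A' : C) (d : Ext E C0 A) (d' : Ext E C0' A')
  : Ext E (bp C0 C0') (bp A A') :=
  Emap E (bp_p1 C0 C0') (bp_i1 A A') d + Emap E (bp_p2 C0 C0') (bp_i2 A A') d'.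

Definition is_infl (A B : C) (x : CHom A B) :=
  exists (C0 : C) (d : Ext E C0 A) (y : CHom B C0), real E d x y.
Definition is_defl (B C0 : C) (y : CHom B C0) :=
  exists (A : C) (d : Ext E C0 A) (x : CHom A B), real E d x y.

Record Extriangulated : Prop := {
  Emap_additive : forall (C1 C0 A0 A1 : C) (c : CHom C1 C0) (a : CHom A0 A1) d1 d2,
      Emap E c a (d1 + d2) = Emap E c a d1 + Emap E c a d2;
  Emap_id : forall (C0 A : C) (d : Ext E C0 A), Emap E (idm C0) (idm A) d = d;
  Emap_comp : forall (C2 C1 C0 A0 A1 A2 : C) (c : CHom C1 C0) (c' : CHom C2 C1)
      (a : CHom A0 A1) (a' : CHom A1 A2) (d : Ext E C0 A0),
      Emap E (ccomp c c') (ccomp a' a) d = Emap E c' a' (Emap E c a d);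
  Emap_addl : forall (C1 C0 A0 A1 : C) (c1 c2 : CHom C1 C0) (a : CHom A0 A1) d,
      Emap E (c1 + c2) a d = Emap E c1 a d + Emap E c2 a d;
  Emap_addr : forall (C1 C0 A0 A1 : C) (c : CHom C1 C0) (a1 a2 : CHom A0 A1) d,
      Emap E c (a1 + a2) d = Emap E c a1 d + Emap E c a2 d;
  real_ex : forall (C0 A : C) (d : Ext E C0 A),
      exists (B : C) (x : CHom A B) (y : CHom B C0), real E d x y;
  real_closed : forall (C0 A B B' : C) (d : Ext E C0 A) (x : CHom A B) (y : CHom B C0)
      (x' : CHom A B') (y' : CHom B' C0),
      real E d x y -> seq_equiv x y x' y' -> real E d x' y';
  real_unique : forall (C0 A B B' : C) (d : Ext E C0 A) (x : CHom A B) (y : CHom B C0)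
      (x' : CHom A B') (y' : CHom B' C0),
      real E d x y -> real E d x' y' -> seq_equiv x y x' y';
  real_morph : forall (A B C0 A' B' C0' : C) (d : Ext E C0 A) (d' : Ext E C0' A')
      (x : CHom A B) (y : CHom B C0) (x' : CHom A' B') (y' : CHom B' C0')
      (a : CHom A A') (c : CHom C0 C0'),
      pushE a d = pullE c d' -> real E d x y -> real E d' x' y' ->
      exists b : CHom B B', ccomp b x = ccomp x' a /\ ccomp y' b = ccomp c y;
  real_zero : forall (C0 A : C),
      real E (0 : Ext E C0 A) (bp_i1 A C0) (bp_p2 A C0);
  real_bp : forall (A B C0 A' B' C0' : C) (d : Ext E C0 A) (d' : Ext E C0' A')
      (x : CHom A B) (y : CHom B C0) (x' : CHom A' B') (y' : CHom B' C0'),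
      real E d x y -> real E d' x' y' ->
      real E (ext_bp d d') (hom_bp x x') (hom_bp y y');
  ET3 : forall (A B C0 A' B' C0' : C) (d : Ext E C0 A) (d' : Ext E C0' A')
      (x : CHom A B) (y : CHom B C0) (x' : CHom A' B') (y' : CHom B' C0')
      (a : CHom A A') (b : CHom B B'),
      real E d x y -> real E d' x' y' -> ccomp b x = ccomp x' a ->
      exists c : CHom C0 C0', ccomp c y = ccomp y' b /\ pushE a d = pullE c d';
  ET3op : forall (A B C0 A' B' C0' : C) (d : Ext E C0 A) (d' : Ext E C0' A')
      (x : CHom A B) (y : CHom B C0) (x' : CHom A' B') (y' : CHom B' C0')
      (b : CHom B B') (c : CHom C0 C0'),
      real E d x y -> real E d' x' y' -> ccomp c y = ccomp y' b ->
      exists a : CHom A A', ccomp b x = ccomp x' a /\ pushE a d = pullE c d';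
  ET4 : forall (A B C0 D F : C) (d : Ext E D A) (d' : Ext E F B)
      (f : CHom A B) (f' : CHom B D) (g : CHom B C0) (g' : CHom C0 F),
      real E d f f' -> real E d' g g' ->
      exists (E0 : C) (h' : CHom C0 E0) (dd : CHom D E0) (e : CHom E0 F)
             (d'' : Ext E E0 A),
        [/\ real E d'' (ccomp g f) h',
            ccomp h' g = ccomp dd f',
            ccomp e h' = g',
            real E (pushE f' d') dd e
          & pullE dd d'' = d /\ pushE f d'' = pullE e d'];
  ET4op : forall (A B C0 D F : C) (d : Ext E A D) (d' : Ext E B F)
      (f' : CHom D B) (f : CHom B A) (g' : CHom F C0) (g : CHom C0 B),
      real E d f' f -> real E d' g' g ->
      exists (E0 : C) (h' : CHom E0 C0) (dd : CHom E0 D) (e : CHom F E0)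
             (d'' : Ext E A E0),
        [/\ real E d'' h' (ccomp f g),
            ccomp g h' = ccomp f' dd,
            ccomp h' e = g',
            real E (pullE f' d') e dd
          & pushE dd d'' = d /\ pullE f d'' = pushE e d']
}.

End ExtDefs.

Definition MorAb_iso (G1 G2 H1 H2 : zmodType) (u : G1 -> G2) (v : H1 -> H2) :=
  exists (phi : G1 -> H1) (psi : G2 -> H2),
    [/\ {morph phi : x y / x + y}, {morph psi : x y / x + y},
        bijective phi, bijective psi & forall x, psi (u x) = v (phi x)].

(* For every object W, the map eps |-> eps^* delta_W from C(Z, Sigma W) to
   E(Z, W) is a natural isomorphism of groups.  It is onto by (ET3): any
   realisation A -> B -> Z of d maps to the realisation W -> 0 -> Sigma W of
   delta_W, and the induced eps satisfies eps^* delta_W = d.  Its kernel is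
   zero: if eps^* delta_W = 0, a morphism from the split realisation
   W -> W (+) Z -> Z of 0 to that of delta_W factors eps o p2 through the zero
   object, so eps = 0.  Naturality in Z is the functoriality of E, and
   naturality in W is the equation f_* delta_X = (Sigma f)^* delta_Y defining
   Sigma f. *)
From HB Require Import structures.
From mathcomp Require Import all_boot all_algebra.
Set Implicit Arguments. Unset Strict Implicit. Unset Printing Implicit Defensive.
Import GRing.Theory.
Local Open Scope ring_scope.

Lemma inj_surj_bij (T : choiceType) (U : eqType) (f : T -> U) :
  injective f -> (forall y, exists x, f x = y) -> bijective f.
Proof.
move=> f_inj f_surj.
have f_surjb y : exists x, f x == y by have [x <-] := f_surj y; exists x.
exists (fun y => xchoose (f_surjb y)) => [x | y]; last exact/eqP/(xchooseP (f_surjb y)).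
by apply: f_inj; apply/eqP/(xchooseP (f_surjb (f x))).
Qed.

Lemma comp0l (C : AddCat) (X Y Z : C) (f : CHom X Y) : ccomp (0 : CHom Y Z) f = 0.
Proof. by apply: (addrI (ccomp 0 f)); rewrite -comp_addl !addr0. Qed.

Section ExtOfHom.
Variables (C : AddCat) (E : ExtData C) (HE : Extriangulated E).
Variables (Sigma : C -> C) (deltaS : forall Y : C, Ext E (Sigma Y) Y).

Definition ext_of_hom (Z W : C) (eps : CHom Z (Sigma W)) : Ext E Z W :=
  pullE eps (deltaS W).

Lemma ext_of_hom_is_nmod_morphism (Z W : C) : nmod_morphism (@ext_of_hom Z W).
Proof.
have ext_of_homD : {morph @ext_of_hom Z W : x y / x + y}.
  by move=> x y; rewrite /ext_of_hom /pullE (Emap_addl HE).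
split; last exact: ext_of_homD.
apply: (addrI (ext_of_hom 0)).
by rewrite -ext_of_homD !addr0.
Qed.

HB.instance Definition _ (Z W : C) :=
  GRing.isNmodMorphism.Build _ _ (@ext_of_hom Z W) (ext_of_hom_is_nmod_morphism Z W).

Lemma ext_of_hom_comp (Z Z' W : C) (eps : CHom Z (Sigma W)) (g : CHom Z' Z) :
  ext_of_hom (ccomp eps g) = pullE g (ext_of_hom eps).
Proof. by rewrite /ext_of_hom /pullE -(Emap_comp HE) comp_idl. Qed.

Lemma ext_of_hom_Sigma (SigmaH : forall X Y : C, CHom X Y -> CHom (Sigma X) (Sigma Y))
    (HSigmaH : forall (X Y : C) (f : CHom X Y),
        pushE f (deltaS X) = pullE (SigmaH X Y f) (deltaS Y))
    (Z X Y : C) (f : CHom X Y) (eps : CHom Z (Sigma X)) :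
  ext_of_hom (ccomp (SigmaH X Y f) eps) = pushE f (ext_of_hom eps).
Proof.
rewrite ext_of_hom_comp /ext_of_hom -HSigmaH /pullE /pushE -!(Emap_comp HE).
by rewrite !comp_idl !comp_idr.
Qed.

Hypothesis HdeltaS :
  forall Y : C, real E (deltaS Y) (0 : CHom Y zobj) (0 : CHom zobj (Sigma Y)).

Lemma ext_of_hom_inj (Z W : C) : injective (@ext_of_hom Z W).
Proof.
apply: raddf_inj => eps eps0.
have push0 : pushE (idm W) (0 : Ext E Z W) = pullE eps (deltaS W).
  by rewrite /pushE (Emap_id HE) -eps0.
have [b [_ eps_p2]] := real_morph HE push0 (real_zero HE Z W) (HdeltaS W).
rewrite comp0l in eps_p2.
by rewrite -(comp_idr eps) -(bp_p2i2 W Z) comp_assoc -eps_p2 comp0l.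
Qed.

Lemma ext_of_hom_surj (Z W : C) (d : Ext E Z W) : exists eps, ext_of_hom eps = d.
Proof.
have [B [x [y real_d]]] := real_ex HE d.
have to_zero : ccomp (0 : CHom B zobj) x = ccomp (0 : CHom W zobj) (idm W).
  by rewrite !comp0l.
have [eps [_ push_d]] := ET3 HE real_d (HdeltaS W) to_zero.
by exists eps; rewrite /ext_of_hom -push_d /pushE (Emap_id HE).
Qed.

Lemma ext_of_hom_bij (Z W : C) : bijective (@ext_of_hom Z W).
Proof. exact: inj_surj_bij (@ext_of_hom_inj Z W) (@ext_of_hom_surj Z W). Qed.

Lemma MorAb_iso_ext_of_hom (Z W Z' W' : C)
    (u : CHom Z (Sigma W) -> CHom Z' (Sigma W')) (v : Ext E Z W -> Ext E Z' W') :
  (forall eps, ext_of_hom (u eps) = v (ext_of_hom eps)) -> MorAb_iso u v.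
Proof.
move=> ext_of_hom_nat; exists (@ext_of_hom Z W), (@ext_of_hom Z' W').
by split; [exact: raddfD | exact: raddfD | exact: ext_of_hom_bij
          | exact: ext_of_hom_bij | ].
Qed.

End ExtOfHom.

Theorem lemma3p10 (C : AddCat) (E : ExtData C) (HE : Extriangulated E)
  (Hinfl : forall X : C, is_infl E (0 : CHom X zobj))
  (Hdefl : forall X : C, is_defl E (0 : CHom zobj X))
  (Sigma : C -> C) (deltaS : forall Y : C, Ext E (Sigma Y) Y)
  (HdeltaS : forall Y : C, real E (deltaS Y) (0 : CHom Y zobj) (0 : CHom zobj (Sigma Y)))
  (SigmaH : forall X Y : C, CHom X Y -> CHom (Sigma X) (Sigma Y))
  (HSigmaH : forall (X Y : C) (f : CHom X Y),
      pushE f (deltaS X) = pullE (SigmaH X Y f) (deltaS Y))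
  (A X Y : C) (f : CHom X Y) :
  MorAb_iso (fun eps : CHom A (Sigma X) => ccomp (SigmaH X Y f) eps)
            (fun d : Ext E A X => pushE f d)
  /\ MorAb_iso (fun eps : CHom Y (Sigma A) => ccomp eps f)
               (fun d : Ext E Y A => pullE f d).
Proof.
(* Hinfl and Hdefl only guarantee that Sigma exists; here it is given with deltaS. *)
split; apply: (MorAb_iso_ext_of_hom HE HdeltaS) => eps.
- exact: ext_of_hom_Sigma.
- exact: ext_of_hom_comp.
Qed.
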